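(* Let $(G,M,I)$ be a finite formal context and let $(H_0(\mathcal F_k))_{k\ge 0}$ be the chain complex obtained by taking zeroth cellular cosheaf homology of each cosheaf $\mathcal F_k:\sigma\mapsto C_k(\Delta[\sigma'])$ on $D(G,M,I)$, with differentials induced by the simplicial boundary maps. Then the homology of this chain complex in degree $k$ is isomorphic to the real simplicial homology $H_k(D(M,G,I^T);\mathbb R)$ of the dual Dowker complex, for every $k\ge 0$.
   Context: A formal context is a triple $(G,M,I)$ with $I\subseteq G\times M$; for $A\subseteq G$, $A'=\{m: gIm\ \forall g\in A\}$, for $B\subseteq M$, $B'=\{g: gIm\ \forall m\in B\}$. The Dowker complex $D(G,M,I)$ is the abstract simplicial complex on $G$ whose simplices are the nonempty $\sigma\subseteq G$ with $\sigma'\ne\emptyset$; $D(M,G,I^T)$ is the abstract simplicial complex on $M$ whose simplices are the nonempty $S\subseteq M$ with $S'\neq\emptyset$. $C_k(\Delta[S])$ is the space of real oriented simplicial $k$-chains of the full simplex on $S$; for $\sigma\subseteq\tau$ the extension $\mathcal F_k(\tau)\to\mathcal F_k(\sigma)$ is induced by $\tau'\subseteq\sigma'$. Cellular cosheaf homology of a cosheaf $\mathcal F$ on $D(G,M,I)$ is the homology of $C_j=\bigoplus_{\dim\tau=j}\mathcal F(\tau)$ with $\partial_j x=\sum_{i}(-1)^i\mathcal F(\tau_i\subseteq\tau)(x)$ ($\tau_i$ the face omitting the $i$-th vertex in a fixed order), and $H_0=C_0/\partial_1C_1$. *)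

From HB Require Import structures.
From mathcomp Require Import all_boot all_order all_algebra.
From mathcomp Require Import reals.
Set Implicit Arguments. Unset Strict Implicit. Unset Printing Implicit Defensive.
Import Order.TTheory GRing.Theory Num.Theory.
Local Open Scope ring_scope.

(* Chains on a finite vertex type T are functions {set T} -> R; the coefficient
   of a simplex tau (a (k+1)-subset) is c tau.  Orientation is fixed by the
   order of T given by enum_rank. *)

Section Chains.
Variables (R : realType) (T : finType).

Definition chain := {ffun {set T} -> R^o}.

Definition sgn (m : T) (tau : {set T}) : R :=
  (-1) ^+ #|[set x in tau | (enum_rank x < enum_rank m)%N]|.

(* Simplicial boundary: d[v0..vk] = sum_i (-1)^i [v0..^vi..vk];
   coefficient of tau in d c is sum over sigma = m |: tau, m \notin tau.
   The coefficient on the empty set is forced to 0 (unreduced: d_0 = 0). *)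
Definition bd (c : chain) : chain :=
  [ffun tau => if tau == set0 then 0
               else \sum_(m | m \notin tau) sgn m (m |: tau) * c (m |: tau)].

Definition is_chain_on (k : nat) (S : {set T}) (c : chain) : Prop :=
  forall tau, c tau != 0 -> (tau \subset S) && (#|tau| == k.+1).

End Chains.

Section Context.
Variables (R : realType) (G M : finType) (I : G -> M -> bool).

Definition intentG (A : {set G}) : {set M} := [set m | [forall g in A, I g m]].
Definition extentM (B : {set M}) : {set G} := [set g | [forall m in B, I g m]].

Definition dowkerG (s : {set G}) : bool := (s != set0) && (intentG s != set0).
Definition dowkerM (S : {set M}) : bool := (S != set0) && (extentM S != set0).

Definition is_Dchain (k : nat) (c : chain R M) : Prop :=
  forall S, c S != 0 -> dowkerM S && (#|S| == k.+1).

Definition dual_cycle (k : nat) (c : chain R M) : Prop :=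
  is_Dchain k c /\ bd c = 0.

Definition dual_boundary (k : nat) (c : chain R M) : Prop :=
  exists d, is_Dchain k.+1 d /\ bd d = c.

(* An element of C_j(D(G); F_k) = (+)_{dim s = j} C_k(Delta[s']) is a function
   x assigning to every simplex s of dimension j a k-chain x s on Delta[s']. *)
Definition cchain := {ffun {set G} -> chain R M}.

Definition is_cchain (j k : nat) (x : cchain) : Prop :=
  (forall s, x s != 0 -> dowkerG s && (#|s| == j.+1)) /\
  (forall s, is_chain_on k (intentG s) (x s)).

(* cellular boundary C_1 -> C_0: the extension maps F_k(t) -> F_k(s) for s in t
   are the inclusions C_k(Delta[t']) -> C_k(Delta[s']) (identity on coefficients);
   the face t_i omitting the i-th vertex h carries sign (-1)^i. *)
Definition cbd1 (y : cchain) : cchain :=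
  [ffun s : {set G} => if #|s| == 1%N then \sum_(h | h \notin s) sgn R h (h |: s) *: y (h |: s)
             else 0].

Definition dF (x : cchain) : cchain := [ffun s : {set G} => bd (x s)].

(* Homology in degree k of the complex (H_0(F_k))_k, described as Z/B with
   Z, B subspaces of C_0(D(G);F_k) (pre-images of cycles / boundaries). *)
Definition H0cx_cycle (k : nat) (x : cchain) : Prop :=
  is_cchain 0 k x /\ exists y, is_cchain 1 k.-1 y /\ dF x = cbd1 y.

Definition H0cx_boundary (k : nat) (x : cchain) : Prop :=
  exists w y, is_cchain 0 k.+1 w /\ is_cchain 1 k y /\ x = dF w + cbd1 y.

End Context.

Definition induces_iso (R : realType) (U V : lmodType R)
  (Z1 B1 : U -> Prop) (Z2 B2 : V -> Prop) (phi : {linear U -> V}) : Prop :=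
  [/\ forall x, Z1 x -> Z2 (phi x),
      forall x, B1 x -> B2 (phi x),
      forall x, Z1 x -> B2 (phi x) -> B1 x
    & forall z, Z2 z -> exists x, Z1 x /\ B2 (phi x - z)].

From HB Require Import structures.
From mathcomp Require Import all_boot all_order all_algebra.
From mathcomp Require Import reals.
Set Implicit Arguments. Unset Strict Implicit. Unset Printing Implicit Defensive.
Import Order.TTheory GRing.Theory Num.Theory.
Local Open Scope ring_scope.

(* The isomorphism is induced by the augmentation [stalk_sum], which adds up
   the stalks of a 0-cochain of F_k into one k-chain on M.  It commutes with
   the boundaries, and it kills the cellular boundaries because the two ends of
   an edge enter with opposite signs.  It is onto the chains of D(M,G,I^T): a
   simplex S is put in the stalk of a chosen vertex g0 of S'.  Its kernel
   consists of cellular boundaries: the coefficient of S at any vertex g can be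
   moved to g0 along the edge {g, g0}, which is a simplex since S is contained
   in g' and g0'. *)

Lemma sumr_neq0 (V : nmodType) (J : finType) (P : pred J) (F : J -> V) :
  \sum_(i | P i) F i != 0 -> exists i, P i && (F i != 0).
Proof.
move=> sum_neq0; apply/existsP; apply: contraNT sum_neq0 => /existsPn F0.
by apply/eqP/big1 => i Pi; move: (F0 i); rewrite Pi negbK => /eqP.
Qed.

Lemma ffun_neq0 (aT : finType) (V : nmodType) (f : {ffun aT -> V}) :
  f != 0 -> exists a, f a != 0.
Proof.
move=> f_neq0; apply/existsP; apply: contraNT f_neq0 => /existsPn f0.
by apply/eqP/ffunP => a; move: (f0 a); rewrite negbK ffunE => /eqP.
Qed.

Lemma sum_set1_supp (V : nmodType) (T : finType) (F : {set T} -> V) :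
  (forall s : {set T}, #|s| != 1%N -> F s = 0) -> \sum_s F s = \sum_t F [set t].
Proof.
move=> F0; transitivity (\sum_s \sum_(t | s == [set t]) F s).
  apply: eq_bigr => s _; have [/cards1P [t ->]|/F0 ->] := boolP (#|s| == 1%N).
    by rewrite (big_pred1 t) // => u; rewrite eq_sym (inj_eq set1_inj).
  by rewrite big1.
rewrite (exchange_big_dep xpredT) //=; apply: eq_bigr => t _.
by rewrite (big_pred1 [set t]).
Qed.

Section Chains.
Variables (R : realType) (T : finType).

Lemma bd_is_linear : linear (@bd R T).
Proof.
move=> a c d; apply/ffunP => tau; rewrite !ffunE.
case: ifP => _; first by rewrite scaler0 addr0.
rewrite scaler_sumr -big_split; apply: eq_bigr => m _.
by rewrite !ffunE mulrDr scalerAr.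
Qed.

HB.instance Definition _ :=
  GRing.isLinear.Build R (chain R T) (chain R T) *:%R (@bd R T) bd_is_linear.

Lemma chain_onB k S (c d : chain R T) :
  is_chain_on k S c -> is_chain_on k S d -> is_chain_on k S (c - d).
Proof.
move=> Sc Sd tau; rewrite !ffunE.
by have [/eqP ->|/Sc //] := boolP (c tau == 0); rewrite sub0r oppr_eq0 => /Sd.
Qed.

Lemma chain_on_bd k S (c : chain R T) :
  is_chain_on k S c -> is_chain_on k.-1 S (bd c).
Proof.
move=> Sc tau; rewrite ffunE; case: ifPn => [_|tau_neq0]; first by rewrite eqxx.
case/sumr_neq0 => m /andP [m_tau]; rewrite mulf_eq0 negb_or => /andP [_ /Sc].
rewrite subUset cardsU1 m_tau add1n => /andP [/andP [_ tauS] /eqP [<-]].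
by rewrite tauS /= prednK ?card_gt0.
Qed.

Lemma sgnK (m : T) (tau : {set T}) : sgn R m tau * sgn R m tau = 1.
Proof. by rewrite -expr2 sqrr_sign. Qed.

Lemma sgn_set2 (h g : T) : h != g ->
  sgn R h [set h; g] = (-1) ^+ (enum_rank g < enum_rank h)%N.
Proof.
move=> hg; rewrite /sgn; congr (_ ^+ _).
have -> : [set x in [set h; g] | (enum_rank x < enum_rank h)%N] =
          if (enum_rank g < enum_rank h)%N then [set g] else set0.
  apply/setP => x; rewrite !inE; case: (eqVneq x h) => [->|_].
    by rewrite ltnn andbF; case: ifP; rewrite ?inE ?(negbTE hg).
  by case: (eqVneq x g) => [->|xg]; case: ifP => _; rewrite ?inE ?eqxx ?(negbTE xg).
by case: ifP; rewrite ?cards1 ?cards0.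
Qed.

Lemma sgn_pair (h g : T) : h != g -> sgn R g [set h; g] = - sgn R h [set h; g].
Proof.
move=> hg; have gh : g != h by rewrite eq_sym.
rewrite [in LHS]setUC !sgn_set2 //.
case: ltngtP => [||/val_inj/enum_rank_inj eq_hg]; rewrite ?opprK //.
by rewrite eq_hg eqxx in hg.
Qed.

Lemma sgn_pairM (h g : T) : h != g -> sgn R h [set h; g] * sgn R g [set h; g] = -1.
Proof. by move=> hg; rewrite sgn_pair // mulrN sgnK. Qed.

End Chains.

Section DowkerDuality.
Variables (R : realType) (G M : finType) (I : G -> M -> bool).

Lemma sub_intentG (s : {set G}) (S : {set M}) :
  (S \subset intentG I s) = (s \subset extentM I S).
Proof.
apply/subsetP/subsetP => sub x x_in; rewrite inE; apply/forallP => y;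
  apply/implyP => y_in; move: (sub y y_in); rewrite inE => /forallP /(_ x);
  by rewrite x_in.
Qed.

Lemma cchainB j k (x w : cchain R G M) :
  is_cchain I j k x -> is_cchain I j k w -> is_cchain I j k (x - w).
Proof.
move=> [supp_x chain_x] [supp_w chain_w]; split => s; rewrite !ffunE;
  last exact: chain_onB.
by have [/eqP ->|/supp_x //] := boolP (x s == 0); rewrite sub0r oppr_eq0 => /supp_w.
Qed.

Lemma cchain_dF k (x : cchain R G M) :
  is_cchain I 0 k x -> is_cchain I 0 k.-1 (dF x).
Proof.
move=> [supp_x chain_x]; split => s; rewrite ffunE; last exact: chain_on_bd.
by move=> bd_neq0; apply: supp_x; apply: contraNneq bd_neq0 => ->; rewrite raddf0.
Qed.

Definition stalk_sum (x : cchain R G M) : chain R M := \sum_s x s.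

Lemma stalk_sum_is_linear : linear stalk_sum.
Proof.
move=> a x y; rewrite /stalk_sum scaler_sumr -big_split.
by apply: eq_bigr => s _; rewrite !ffunE.
Qed.

HB.instance Definition _ := GRing.isLinear.Build R (cchain R G M) (chain R M)
  *:%R stalk_sum stalk_sum_is_linear.

Lemma stalk_sum_dF x : stalk_sum (dF x) = bd (stalk_sum x).
Proof. by rewrite raddf_sum; apply: eq_bigr => s _; rewrite ffunE. Qed.

Lemma stalk_sum_cbd1 y : stalk_sum (cbd1 y) = 0.
Proof.
pose F (h g : G) := sgn R h [set h; g] *: y [set h; g].
have sum_edges : stalk_sum (cbd1 y) = \sum_g \sum_(h | h != g) F h g.
  rewrite /stalk_sum (@sum_set1_supp _ _ (cbd1 y)); last first.
    by move=> s /negbTE s1; rewrite ffunE s1.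
  apply: eq_bigr => g _; rewrite ffunE cards1 eqxx.
  by apply: eq_bigl => h; rewrite in_set1.
have sum_swap : \sum_g \sum_(h | h != g) F h g = \sum_g \sum_(h | h != g) F g h.
  rewrite (exchange_big_dep xpredT) //=; apply: eq_bigr => g _.
  by apply: eq_bigl => h; rewrite eq_sym.
(* each edge {h, g} appears twice, with opposite signs *)
have : stalk_sum (cbd1 y) *+ 2 = 0.
  rewrite mulr2n sum_edges {2}sum_swap -big_split /=.
  apply: big1 => g _; rewrite -big_split /=; apply: big1 => h hg.
  by rewrite /F (setUC [set g]) sgn_pair // scaleNr addrN.
by rewrite -[_ *+ 2]scaler_nat => /eqP; rewrite scaler_eq0 pnatr_eq0 => /eqP.
Qed.

Lemma Dchain_stalk_sum k (x : cchain R G M) :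
  is_cchain I 0 k x -> is_Dchain I k (stalk_sum x).
Proof.
move=> [supp_x chain_x] S; rewrite /stalk_sum sum_ffunE => /sumr_neq0 [s /= xsS].
have /supp_x /andP [/andP [s_neq0 _] _] : x s != 0.
  by apply: contraNneq xsS => ->; rewrite ffunE.
have /andP [S_sub /eqP cardS] := chain_x s S xsS.
rewrite /dowkerM cardS eqxx andbT -card_gt0 cardS /=.
by apply: contraNneq s_neq0 => ext0; rewrite -subset0 -ext0 -sub_intentG.
Qed.

Definition witness (S : {set M}) : option G := [pick g in extentM I S].

Lemma witness_extent S g : witness S = Some g -> g \in extentM I S.
Proof. by rewrite /witness; case: pickP => // g' g'_in [<-]. Qed.

Lemma witness_None S g : witness S = None -> g \in extentM I S = false.
Proof. by rewrite /witness; case: pickP => // ext0 _; apply: ext0. Qed.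

Definition lift_chain (z : chain R M) : cchain R G M :=
  [ffun s => [ffun S => if witness S is Some g then
                          (if s == [set g] then z S else 0) else 0]].

Lemma stalk_sum_onto k (z : chain R M) :
  is_Dchain I k z -> exists2 x, is_cchain I 0 k x & stalk_sum x = z.
Proof.
move=> Dz; exists (lift_chain z); last first.
  apply/ffunP => S; rewrite /stalk_sum sum_ffunE.
  under eq_bigr do rewrite !ffunE.
  case wS: (witness S) => [g|]; first by rewrite -big_mkcond big_pred1_eq.
  rewrite big1 //; apply/esym/eqP; apply: contraT => /Dz /andP [/andP [_]].
  by case/set0Pn => g; rewrite (witness_None g wS).
have supp s S : lift_chain z s S != 0 ->
    exists2 g, s = [set g] & [&& g \in extentM I S, z S != 0 & dowkerM I S].
  rewrite !ffunE; case wS: (witness S) => [g|]; last by rewrite eqxx.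
  case: (eqVneq s [set g]) => [-> zS|_]; last by rewrite eqxx.
  by exists g; rewrite ?witness_extent //= zS; case/andP: (Dz S zS).
split=> [s|s S].
- case/ffun_neq0 => S /supp [g -> /and3P [g_ext zS /andP [S_neq0 _]]].
  rewrite /dowkerG -card_gt0 cards1 eqxx andbT /=.
  apply: contraNneq S_neq0 => int0.
  by rewrite -subset0 -int0 sub_intentG sub1set.
- case/supp => g -> /and3P [g_ext /Dz /andP [_ ->] _].
  by rewrite sub_intentG sub1set g_ext.
Qed.

Definition cbd1_lift (x : cchain R G M) : cchain R G M :=
  [ffun e : {set G} => [ffun S => if witness S is Some g0 then
     (if g0 \in e then sgn R g0 e * x (e :\ g0) S else 0) else 0]].

Lemma cchain_cbd1_lift k (x : cchain R G M) :
  is_cchain I 0 k x -> is_cchain I 1 k (cbd1_lift x).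
Proof.
move=> [supp_x chain_x].
suff supp e S : cbd1_lift x e S != 0 ->
    [&& dowkerG I e, #|e| == 2, S \subset intentG I e & #|S| == k.+1].
  by split=> [e /ffun_neq0 [S /supp /and4P [-> ->]]|e S /supp /and4P [_ _ -> ->]].
rewrite !ffunE; case wS: (witness S) => [g0|]; last by rewrite eqxx.
case: ifPn => [g0e|_]; last by rewrite eqxx.
rewrite mulf_eq0 negb_or => /andP [_ xS].
have /supp_x /andP [_ /eqP card1] : x (e :\ g0) != 0.
  by apply: contraNneq xS => ->; rewrite ffunE.
have /andP [S_sub /eqP cardS] := chain_x _ _ xS.
have S_sub_e : S \subset intentG I e.
  rewrite sub_intentG -(setD1K g0e) subUset sub1set witness_extent //.
  by rewrite -sub_intentG.
rewrite (cardsD1 g0) g0e card1 S_sub_e cardS !eqxx !andbT /dowkerG.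
apply/andP; split; first by apply/set0Pn; exists g0.
by apply: contraTneq S_sub_e => ->; rewrite subset0 -card_gt0 cardS.
Qed.

Lemma cbd1_lift_set1 (x : cchain R G M) a S :
  cbd1 (cbd1_lift x) [set a] S =
  if witness S is Some g0 then
    (if a == g0 then - \sum_(h | h != g0) x [set h] S else x [set a] S)
  else 0.
Proof.
rewrite ffunE cards1 eqxx sum_ffunE.
under eq_bigr do rewrite !ffunE.
case wS: (witness S) => [g0|]; last by rewrite big1 // => h _; rewrite scaler0.
have [->|a_neq_g0] := eqVneq a g0.
  rewrite -sumrN; apply: eq_big => [h|h]; rewrite in_set1 // => h_neq_g0.
  rewrite set22 scalerA sgn_pairM // scaleN1r (setUC [set h]) setU1K //.
  by rewrite in_set1 eq_sym.
rewrite (bigD1 g0) /=; last by rewrite in_set1 eq_sym.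
rewrite set21 scalerA sgnK scale1r setU1K ?in_set1 1?eq_sym // big1 ?addr0 //.
move=> h /andP [h_neq_a h_neq_g0]; rewrite in_set1 in h_neq_a.
by rewrite !inE ![g0 == _]eq_sym (negbTE a_neq_g0) (negbTE h_neq_g0) scaler0.
Qed.

Lemma stalk_sum_ker k (x : cchain R G M) :
  is_cchain I 0 k x -> stalk_sum x = 0 -> exists2 y, is_cchain I 1 k y & cbd1 y = x.
Proof.
move=> cx sum0; exists (cbd1_lift x); first exact: cchain_cbd1_lift.
have [supp_x chain_x] := cx.
have x_set1 (s : {set G}) S : #|s| != 1%N -> x s S = 0.
  move=> s1; suff -> : x s = 0 by rewrite ffunE.
  by apply/eqP; apply: contraT => /supp_x /andP [_]; rewrite (negbTE s1).
apply/ffunP => s; apply/ffunP => S.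
have [/cards1P [a ->]|s1] := boolP (#|s| == 1%N); last first.
  by rewrite x_set1 // !ffunE (negbTE s1) ffunE.
rewrite (cbd1_lift_set1 x a S); case wS: (witness S) => [g0|]; last first.
  apply/esym/eqP; apply: contraT => /chain_x /andP [].
  by rewrite sub_intentG sub1set witness_None.
have [->|//] := eqVneq a g0.
have := congr1 (fun c : chain R M => c S) sum0.
rewrite /stalk_sum sum_ffunE ffunE (sum_set1_supp (x_set1^~ S)).
by rewrite (bigD1 g0) //= => /eqP; rewrite addr_eq0 => /eqP ->.
Qed.

End DowkerDuality.

Theorem mainTheorem7 (R : realType) (G M : finType) (I : G -> M -> bool) (k : nat) :
  exists phi : {linear cchain R G M -> chain R M},
    induces_iso (H0cx_cycle I k) (H0cx_boundary I k)
                (dual_cycle I k) (dual_boundary I k) phi.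
Proof.
exists (@stalk_sum R G M); split.
- move=> x [cx [y [_ dFx]]]; split; first exact: Dchain_stalk_sum.
  by rewrite -stalk_sum_dF dFx stalk_sum_cbd1.
- move=> _ [w [y [cw [_ ->]]]]; exists (stalk_sum w); split.
    exact: Dchain_stalk_sum.
  by rewrite raddfD /= stalk_sum_cbd1 addr0 stalk_sum_dF.
- move=> x [cx _] [d [Dd bd_d]].
  have [w cw sum_w] := stalk_sum_onto Dd.
  have [y cy cbd1y] : exists2 y, is_cchain I 1 k y & cbd1 y = x - dF w.
    apply: stalk_sum_ker; first exact: cchainB cx (cchain_dF cw).
    by rewrite raddfB /= stalk_sum_dF sum_w bd_d subrr.
  by exists w, y; rewrite cbd1y addrC subrK.
- move=> z [Dz bd_z].
  have [x cx sum_x] := stalk_sum_onto Dz.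
  have [y cy cbd1y] : exists2 y, is_cchain I 1 k.-1 y & cbd1 y = dF x.
    by apply: stalk_sum_ker; [exact: cchain_dF | rewrite stalk_sum_dF sum_x].
  exists x; split; first by split => //; exists y.
  by exists 0; split; [move=> S; rewrite ffunE eqxx | rewrite raddf0 /= sum_x subrr].
Qed.
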